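(* Let $X$ be a real random variable with density $p$, $\mathbb{E}X=0$, $\mathrm{Var}(X)=1$, $\mathbb{E}|X|^s<\infty$ for some $s>2$, and $\|p-\phi\|_\infty\le1/2$. Then there exists $C_1>0$ such that for every $\varepsilon>0$, \[ D(X)\le C_1(\mathbb{E}|X|^s)^{2/s}\Big(\sqrt{|\ln\|p-\phi\|_\infty|}\,\|p-\phi\|_\infty\Big)^{1-2/s}\le C_1M(\varepsilon)(\mathbb{E}|X|^s)^{2/s}\|p-\phi\|_\infty^{(1-2/s)(1-\varepsilon)}, \] where $M(\varepsilon):=\max_{x\in[0,1]}x^\varepsilon\sqrt{|\ln x|}+1<\infty$.
   Context: $\phi(x)=(2\pi)^{-1/2}e^{-x^2/2}$. $D(X)$ denotes the Kullback–Leibler divergence of $X$ from a Gaussian with the same mean and variance as $X$; here $D(X)=\int p\ln(p/\phi)$. $\|\cdot\|_\infty$ is the sup norm on $\mathbb{R}$. *)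

From HB Require Import structures.
From mathcomp Require Import all_boot all_order all_algebra.
From mathcomp Require Import all_classical all_reals all_analysis.
Set Implicit Arguments. Unset Strict Implicit. Unset Printing Implicit Defensive.
Import Order.TTheory GRing.Theory Num.Theory.
Import numFieldNormedType.Exports.
Local Open Scope classical_set_scope.
Local Open Scope ring_scope.

Definition gauss_phi (R : realType) (x : R) : R :=
  (Num.sqrt (2 * pi))^-1 * expR (- (x ^+ 2) / 2).

Definition supnorm_diff (R : realType) (p : R -> R) : \bar R :=
  ereal_sup [set (`|p x - gauss_phi x|)%:E | x in [set: R]].

(* D(X) = \int p ln (p / phi)  (with the convention 0 ln 0 = 0, as ln 0 = 0) *)
Definition KL_gauss (R : realType) (p : R -> R) : \bar R :=
  (\int[@lebesgue_measure R]_x (p x * ln (p x / gauss_phi x))%:E)%E.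

Definition abs_moment (R : realType) (p : R -> R) (s : R) : \bar R :=
  (\int[@lebesgue_measure R]_x ((`|x| `^ s) * p x)%:E)%E.

Definition Meps (R : realType) (eps : R) : R :=
  sup [set x `^ eps * Num.sqrt `|ln x| | x in `[0, 1]] + 1.

From HB Require Import structures.
From mathcomp Require Import all_boot all_order all_algebra.
From mathcomp Require Import all_classical all_reals all_analysis.
From mathcomp Require Import ring lra measurable_realfun.
Set Implicit Arguments.
Unset Strict Implicit.
Unset Printing Implicit Defensive.
Import Order.TTheory GRing.Theory Num.Theory.
Import numFieldNormedType.Exports.
Local Open Scope classical_set_scope.
Local Open Scope ring_scope.

(* Write [p ln (p / phi) = (p ln p - phi ln phi) + (p - phi) (- ln phi)].  Since
   [- ln phi x = ln (sqrt (2 pi)) + x^2 / 2] and [p], [phi] have the same mass and second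
   moment, the second term integrates to zero; that [phi] has second moment one follows
   from Gibbs' inequality against the normal densities of all other variances.  On
   [[-T, T]] the first term is controlled by the modulus of continuity of [t ln t],
   which is [O(d^(1-e) / e)] for [d = ||p - phi||_oo]; outside it is at most
   [- phi ln phi], a Gaussian tail [O(e^(-T^2/8))].  Taking [T = 1 - 8 ln d] and
   [e = 1/s] gives [D(X) <= K d^(1 - 2/s)], which implies the stated bound because
   [E|X|^s >= (E X^2)^(s/2) = 1] and [|ln d| >= ln 2]. *)

Section real_inequalities.
Context {R : realType}.
Implicit Types a b c d e s u v x y z : R.

Lemma mulr_expRN_le1 y : y * expR (- y) <= 1.
Proof.
have yE : y <= expR y by have := expR_ge1Dx y; lra.
have -> : 1 = expR y * expR (- y) by rewrite -expRD subrr expR0.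
by rewrite ler_pM2r ?expR_gt0.
Qed.

Lemma powR_mulNln_le e x : 0 < e -> 0 < x <= 1 -> x `^ e * - ln x <= e^-1.
Proof.
move=> e0 /andP[x0 x1].
have -> : x `^ e * - ln x = e^-1 * ((- e * ln x) * expR (- (- e * ln x))).
  by rewrite /powR gt_eqF// mulNr opprK; field; rewrite gt_eqF.
rewrite -[leRHS]mulr1; apply: ler_wpM2l; last exact: mulr_expRN_le1.
by rewrite invr_ge0 ltW.
Qed.

Lemma powR_split e x : 0 < x -> x = x `^ (1 - e) * x `^ e.
Proof. by move=> x0; rewrite -powRD ?subrK ?powRr1 ?ltW// gt_eqF ?implybT. Qed.

Lemma xlnx_le0 u : 0 <= u <= 1 -> u * ln u <= 0.
Proof. by move=> /andP[u0 u1]; rewrite mulr_ge0_le0// ln_le0. Qed.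

Lemma Nxlnx_le_powR e v : 0 < e -> 0 <= v <= 1 -> - (v * ln v) <= v `^ (1 - e) / e.
Proof.
move=> e0 /andP[v0 v1]; have [->|vneq0] := eqVneq v 0.
  by rewrite mul0r oppr0 divr_ge0 ?powR_ge0 ?ltW.
have vp : 0 < v by rewrite lt_neqAle eq_sym vneq0.
have -> : - (v * ln v) = v `^ (1 - e) * (v `^ e * - ln v).
  by rewrite mulrA -(powR_split e vp) mulrN.
by rewrite ler_wpM2l ?powR_ge0// powR_mulNln_le ?vp.
Qed.

Lemma xlnx_tangent u v : 0 < u -> 0 <= v ->
  u * ln u - v * ln v <= (u - v) * (ln u + 1).
Proof.
move=> u0; rewrite le_eqVlt => /predU1P[<-|v0].
  by rewrite mul0r !subr0 mulrDr mulr1 lerDl ltW.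
have : ln (u / v) <= u / v - 1.
  have hx : -1 < u / v - 1 by have := divr_gt0 u0 v0; lra.
  by have := le_ln1Dx hx; rewrite addrC subrK.
rewrite ln_div ?posrE// => hl.
have : v * (ln u - ln v) <= v * (u / v - 1) by rewrite ler_wpM2l// ltW.
rewrite mulrBr mulrBr mulr1 mulrCA divff ?gt_eqF// mulr1; lra.
Qed.

Lemma xlnx_modulus e u v d : 0 < e <= 1 -> 0 <= u <= 1 -> 0 <= v <= 1 ->
  `|u - v| <= d -> d <= 1 -> u * ln u - v * ln v <= 2 / e * d `^ (1 - e).
Proof.
move=> /andP[e0 e1] /andP[u0 u1] /andP[v0 v1] uvd d1.
have d0 : 0 <= d := le_trans (normr_ge0 _) uvd.
have dpow0 : 0 <= d `^ (1 - e) := powR_ge0 _ _.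
have dpow : d <= 2 / e * d `^ (1 - e).
  have d_le : d <= d `^ (1 - e).
    have [->|dneq0] := eqVneq d 0; first exact: powR_ge0.
    by apply: ger1_powR; rewrite ?lt_neqAle 1?eq_sym ?dneq0 ?d0 ?d1//; lra.
  by apply: (le_trans d_le); rewrite ler_peMl// ler_pdivlMr//; lra.
have [vu|uv] := leP v u.
  have [u00|u0'] := eqVneq u 0.
    have v00 : v = 0 by apply/le_anti; rewrite v0 -u00 vu.
    by rewrite u00 v00 subrr mulr_ge0// divr_ge0// ltW.
  have u0p : 0 < u by rewrite lt_neqAle eq_sym u0' u0.
  apply: (le_trans (xlnx_tangent u0p v0)); apply: le_trans dpow.
  have := ln_le0 u1; move: uvd; rewrite ger0_norm ?subr_ge0//; nra.
have vud : v - u <= d by move: uvd; rewrite distrC ger0_norm ?subr_ge0// ltW.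
have [du|ud] := leP d u.
  have u0p : 0 < u by lra.
  apply: (le_trans (xlnx_tangent u0p v0)).
  have lnud : - ln u <= - ln d by rewrite lerN2 ler_ln ?posrE//; lra.
  have lnu0 : 0 <= - ln u by rewrite oppr_ge0 ln_le0.
  have hd := @Nxlnx_le_powR e d e0 ltac:(by rewrite d0 d1).
  have ei : 0 < e^-1 by rewrite invr_gt0.
  nra.
have := xlnx_le0 (u := u) ltac:(by rewrite u0 u1).
have := Nxlnx_le_powR e0 (v := v) ltac:(by rewrite v0 v1).
have : v `^ (1 - e) <= 2 * d `^ (1 - e).
  apply: (@le_trans _ _ ((2 * d) `^ (1 - e))).
    by apply: ge0_ler_powR; rewrite ?nnegrE; lra.
  rewrite powRM; [|lra|lra].
  by rewrite ler_wpM2r// ler1_powR; lra.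
have : 0 < e^-1 by rewrite invr_gt0.
rewrite mulrAC; nra.
Qed.

Lemma powR_le1D a z : 0 <= a <= 1 -> 0 <= z -> z `^ a <= 1 + z.
Proof.
move=> /andP[a0 a1] z0; have [z1|z1] := leP 1 z.
  by apply: (le_trans (ler1_powR z1 a1)); rewrite lerDr.
apply: (@le_trans _ _ 1); last by rewrite lerDl.
by have := @ge0_ler_powR _ a a0 z 1; rewrite powR1 => ->; rewrite ?nnegrE// ltW.
Qed.

Lemma powR_mul_1DNln_le c e d : 0 <= c -> 0 < e -> 0 < d <= 1 ->
  d `^ (1 - e) * (1 - c * ln d) <= (1 + c / e) * d `^ (1 - 2 * e).
Proof.
move=> c0 e0 /andP[d0 d1].
have -> : 1 - e = 1 - 2 * e + e by ring.
rewrite powRD ?(gt_eqF d0) ?implybT//.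
rewrite -mulrA mulrC ler_wpM2r ?powR_ge0//.
have dlnd := powR_mulNln_le e0 (x := d) ltac:(by rewrite d0 d1).
have de1 : d `^ e <= 1 by rewrite -(powRr0 d) ger_powR ?d0 ?d1// ltW.
nra.
Qed.

Lemma affine_mul_expR_le a b y : 0 <= a -> 0 <= b -> 0 <= y ->
  (a + b * y) * expR (- y / 2) <= (a + 4 * b) * expR (- y / 4).
Proof.
move=> a0 b0 y0.
have -> : expR (- y / 2) = expR (- (y / 4)) * expR (- y / 4).
  by rewrite -expRD; congr expR; field.
rewrite mulrA ler_wpM2r ?expR_ge0//.
have h1 := mulr_expRN_le1 (y / 4).
have h2 : expR (- (y / 4)) <= 1 by rewrite expR_le1 oppr_le0 divr_ge0.
have := expR_ge0 (- (y / 4)); nra.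
Qed.

Lemma sqr_le_convex_powR s x : 2 < s ->
  x ^+ 2 <= 2 / s * `|x| `^ s + (1 - 2 / s).
Proof.
move=> s2; have s0 : 0 < s by lra.
have xsE : (x ^+ 2) `^ (s / 2) = `|x| `^ s.
  by rewrite -(real_normK (num_real x)) -powR_mulrn// -powRrM; congr powR; field.
have := @conjugate_powR R (x ^+ 2) 1 (s / 2) (s / (s - 2)).
rewrite mulr1 powR1 xsE !invf_div mul1r => h.
have -> : 1 - 2 / s = (s - 2) / s by field; lra.
rewrite mulrC; apply: h; rewrite ?sqr_ge0 ?divr_gt0//; try lra.
by field; rewrite gt_eqF.
Qed.

End real_inequalities.

Section gaussian.
Context {R : realType}.
Implicit Types a b x T sg : R.

Definition gauss_peak : R := (Num.sqrt (2 * pi))^-1.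

Lemma gauss_peak_gt0 : 0 < gauss_peak.
Proof. by rewrite invr_gt0 sqrtr_gt0 mulr_gt0// pi_gt0. Qed.

Lemma gauss_peak_le_half : gauss_peak <= 2^-1.
Proof.
rewrite /gauss_peak lef_pV2 ?posrE ?sqrtr_gt0 ?mulr_gt0 ?pi_gt0//.
have sqrt4 : Num.sqrt (2 ^+ 2) = 2 :> R by rewrite sqrtr_sqr ger0_norm.
rewrite -[X in X <= _]sqrt4 ler_sqrt ?mulr_ge0 ?pi_ge0// expr2.
by rewrite ler_pM2l// pi_ge2.
Qed.

Lemma gauss_peak_le1 : gauss_peak <= 1.
Proof. by apply: (le_trans gauss_peak_le_half); rewrite invf_le1// ler1n. Qed.

Lemma gauss_phiE x : gauss_phi x = gauss_peak * expR (- x ^+ 2 / 2).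
Proof. by []. Qed.

Lemma gauss_phi_gt0 x : 0 < gauss_phi x.
Proof. by rewrite mulr_gt0 ?gauss_peak_gt0 ?expR_gt0. Qed.

Lemma gauss_phi_le_peak x : gauss_phi x <= gauss_peak.
Proof.
rewrite gauss_phiE -[leRHS]mulr1 ler_pM2l ?gauss_peak_gt0//.
by rewrite expR_le1 mulNr oppr_le0 mulr_ge0// sqr_ge0.
Qed.

Lemma Nln_gauss_phi x : - ln (gauss_phi x) = - ln gauss_peak + x ^+ 2 / 2.
Proof. by rewrite lnM ?posrE ?gauss_peak_gt0 ?expR_gt0// expRK mulNr; ring. Qed.

Lemma normal_pdf0E sg x : sg != 0 ->
  normal_pdf 0 sg x = normal_peak sg * expR (- x ^+ 2 / (sg ^+ 2 *+ 2)).
Proof. by move=> sg0; rewrite /normal_pdf (negbTE sg0) /normal_fun subr0. Qed.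

Lemma normal_peakE sg : 0 < sg -> normal_peak sg = gauss_peak / sg.
Proof.
move=> sg0; rewrite /normal_peak /gauss_peak -mulr_natr -mulrA mulrC.
by rewrite sqrtrM ?mulr_ge0 ?pi_ge0// sqrtr_sqr gtr0_norm// invfM [pi * 2]mulrC.
Qed.

Lemma gauss_phi_normal_pdf : @gauss_phi R =1 normal_pdf 0 1.
Proof.
move=> x; rewrite normal_pdf0E ?oner_eq0// normal_peakE// gauss_phiE.
by rewrite divr1 expr1n.
Qed.

(* [e^E >= 1 + E] for [E = ln (q / phi)], [q] the centred normal density of variance [sg^2]. *)
Lemma normal_pdf_sub_gauss_phi_ge sg x : 0 < sg ->
  - ln sg * gauss_phi x + (1 - sg ^-2) / 2 * (x ^+ 2 * gauss_phi x) <=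
  normal_pdf 0 sg x - gauss_phi x.
Proof.
move=> sg0; set E := - ln sg + x ^+ 2 / 2 * (1 - sg ^-2).
have -> : normal_pdf 0 sg x = gauss_phi x * expR E.
  rewrite normal_pdf0E ?gt_eqF// normal_peakE// gauss_phiE.
  rewrite /E expRD expRN lnK ?posrE// -!mulrA; congr (_ * _).
  rewrite mulrCA -expRD; congr (_ * expR _).
  by rewrite -mulr_natr; field; rewrite gt_eqF.
have -> : - ln sg * gauss_phi x + (1 - sg ^-2) / 2 * (x ^+ 2 * gauss_phi x) =
  gauss_phi x * E by rewrite /E; ring.
rewrite lerBrDl -[X in X + _]mulr1 -mulrDr ler_pM2l ?gauss_phi_gt0//.
exact: expR_ge1Dx.
Qed.

Lemma gauss_phi_affine_le a b x : 0 <= a -> 0 <= b ->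
  gauss_phi x * (a + b * x ^+ 2) <=
  (a + 4 * b) * gauss_peak / normal_peak 2 * expR (- x ^+ 2 / 8) * normal_pdf 0 2 x.
Proof.
move=> a0 b0; have pk : 0 < normal_peak (2 : R) by rewrite normal_peak_gt0.
rewrite normal_pdf0E ?pnatr_eq0// gauss_phiE.
have -> : (2 : R) ^+ 2 *+ 2 = 8 by rewrite -mulr_natr; ring.
have -> : (a + 4 * b) * gauss_peak / normal_peak 2 * expR (- x ^+ 2 / 8) *
    (normal_peak 2 * expR (- x ^+ 2 / 8)) =
    gauss_peak * ((a + 4 * b) * expR (- x ^+ 2 / 4)).
  have -> : expR (- x ^+ 2 / 4) = expR (- x ^+ 2 / 8) * expR (- x ^+ 2 / 8).
    by rewrite -expRD; congr expR; field.
  by field; rewrite gt_eqF.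
rewrite -mulrA ler_pM2l ?gauss_peak_gt0// mulrC.
exact: affine_mul_expR_le (sqr_ge0 x).
Qed.

Definition gauss_tail_const : R := (2 - ln gauss_peak) * gauss_peak / normal_peak 2.

Lemma gauss_tail_const_ge0 : 0 <= gauss_tail_const.
Proof.
rewrite divr_ge0 ?normal_peak_ge0// mulr_ge0 ?ltW ?gauss_peak_gt0//.
by have := ln_le0 gauss_peak_le1; lra.
Qed.

Lemma sqr_gauss_phi_le x :
  x ^+ 2 * gauss_phi x <= 4 * gauss_peak / normal_peak 2 * normal_pdf 0 2 x.
Proof.
have := @gauss_phi_affine_le 0 1 x (lexx _) ler01.
rewrite mul1r mulr1 !add0r mulrC => /le_trans; apply.
rewrite ler_wpM2r ?normal_pdf_ge0// -[leRHS]mulr1 ler_wpM2l//.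
- by rewrite divr_ge0 ?normal_peak_ge0 ?mulr_ge0 ?ltW ?gauss_peak_gt0.
- by rewrite expR_le1 mulNr oppr_le0 divr_ge0 ?sqr_ge0.
Qed.

Lemma Nxlnx_gauss_phi_tail x T : 0 <= T -> T < `|x| ->
  - (gauss_phi x * ln (gauss_phi x)) <=
  gauss_tail_const * expR (- T ^+ 2 / 8) * normal_pdf 0 2 x.
Proof.
move=> T0 Tx; rewrite -mulrN Nln_gauss_phi.
have lnpk : 0 <= - ln gauss_peak by rewrite oppr_ge0 ln_le0 ?gauss_peak_le1.
have half0 : 0 <= 2^-1 :> R by rewrite invr_ge0.
have := gauss_phi_affine_le x lnpk half0.
have -> : - ln gauss_peak + 4 / 2 = 2 - ln gauss_peak :> R by field.
rewrite [2^-1 * _]mulrC => /le_trans; apply.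
rewrite ler_wpM2r ?normal_pdf_ge0// ler_wpM2l ?gauss_tail_const_ge0// ler_expR.
have : T ^+ 2 <= x ^+ 2 by rewrite -(real_normK (num_real x)) ler_sqr ?nnegrE// ltW.
lra.
Qed.

End gaussian.

Section real_integrals.
Context d (T : measurableType d) (R : realType) (mu : {measure set T -> \bar R}).
Implicit Types f g : T -> R.

Lemma integrable_EFinD f g :
  mu.-integrable setT (EFin \o f) -> mu.-integrable setT (EFin \o g) ->
  mu.-integrable setT (EFin \o (fun x => f x + g x)).
Proof.
by move=> hf hg; exact: eq_integrable measurableT _ _ _ (integrableD measurableT hf hg).
Qed.

Lemma integrable_EFinB f g :
  mu.-integrable setT (EFin \o f) -> mu.-integrable setT (EFin \o g) ->
  mu.-integrable setT (EFin \o (fun x => f x - g x)).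
Proof.
by move=> hf hg; exact: eq_integrable measurableT _ _ _ (integrableB measurableT hf hg).
Qed.

Lemma integrable_EFinZl k f : mu.-integrable setT (EFin \o f) ->
  mu.-integrable setT (EFin \o (fun x => k * f x)).
Proof. by move=> hf; exact: eq_integrable measurableT _ _ _ (integrableZl measurableT k hf). Qed.

Lemma integral_EFinD f g :
  mu.-integrable setT (EFin \o f) -> mu.-integrable setT (EFin \o g) ->
  (\int[mu]_x (f x + g x)%:E = \int[mu]_x (f x)%:E + \int[mu]_x (g x)%:E)%E.
Proof. by move=> hf hg; rewrite -(integralD_EFin measurableT hf hg). Qed.

Lemma integral_EFinB f g :
  mu.-integrable setT (EFin \o f) -> mu.-integrable setT (EFin \o g) ->
  (\int[mu]_x (f x - g x)%:E = \int[mu]_x (f x)%:E - \int[mu]_x (g x)%:E)%E.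
Proof. by move=> hf hg; rewrite -(integralB_EFin measurableT hf hg). Qed.

Lemma integral_EFinZl k f : mu.-integrable setT (EFin \o f) ->
  (\int[mu]_x (k * f x)%:E = k%:E * \int[mu]_x (f x)%:E)%E.
Proof. by move=> hf; rewrite -(integralZl measurableT hf k). Qed.

Lemma integrable_EFin_ge0 f : measurable_fun setT f -> (forall x, 0 <= f x) ->
  (\int[mu]_x (f x)%:E < +oo)%E -> mu.-integrable setT (EFin \o f).
Proof.
move=> mf f0 fi; apply/integrableP; split; first exact/measurable_EFinP.
by under eq_integral do rewrite /= ger0_norm ?f0//.
Qed.

Lemma le_integral_EFin f g : measurable_fun setT f -> measurable_fun setT g ->
  (forall x, f x <= g x) -> (\int[mu]_x (f x)%:E <= \int[mu]_x (g x)%:E)%E.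
Proof.
move=> /measurable_EFinP mf /measurable_EFinP mg fg.
rewrite integralE [leRHS]integralE leeB//.
- apply: ge0_le_integral => //; [exact: measurable_funepos..|].
  by move=> x _; apply: (funepos_le (D := setT)) => [y _|]; rewrite ?lee_fin ?in_setT.
- apply: ge0_le_integral => //; [exact: measurable_funeneg..|].
  by move=> x _; apply: (funeneg_le (D := setT)) => [y _|]; rewrite ?lee_fin ?in_setT.
Qed.

End real_integrals.

Section gauss_moments.
Context {R : realType}.
Local Notation mu := (@lebesgue_measure R).
Implicit Types sg : R.

Lemma measurable_gauss_phi : measurable_fun setT (@gauss_phi R).
Proof.
apply: eq_measurable_fun (measurable_normal_pdf 0 1) => x _.
by rewrite gauss_phi_normal_pdf.
Qed.

Lemma integrable_gauss_phi : mu.-integrable setT (EFin \o @gauss_phi R).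
Proof.
apply: eq_integrable measurableT _ _ _ (integrable_normal_pdf 0 1) => x _.
by rewrite /= gauss_phi_normal_pdf.
Qed.

Lemma integral_gauss_phi : (\int[mu]_x (gauss_phi x)%:E = 1)%E.
Proof.
rewrite -(integral_normal_pdf 0 1); apply: eq_integral => x _.
by rewrite gauss_phi_normal_pdf.
Qed.

Lemma integrable_sqr_gauss_phi :
  mu.-integrable setT (EFin \o (fun x => x ^+ 2 * @gauss_phi R x)).
Proof.
apply: le_integrable
  (integrable_EFinZl (4 * gauss_peak / normal_peak 2) (integrable_normal_pdf 0 2)) => //.
  by apply/measurable_EFinP/measurable_funM => //; exact: measurable_gauss_phi.
move=> x _ /=; rewrite lee_fin ger0_norm; last first.
  by rewrite mulr_ge0 ?sqr_ge0// ltW// gauss_phi_gt0.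
exact: le_trans (sqr_gauss_phi_le x) (ler_norm _).
Qed.

(* Integrating [normal_pdf_sub_gauss_phi_ge]: both densities have mass one. *)
Lemma gauss_second_moment_le sg : 0 < sg ->
  (1 - sg ^-2) / 2 * fine (\int[mu]_x (x ^+ 2 * gauss_phi x)%:E) <= ln sg.
Proof.
move=> sg0; set M := fine _.
have ME : (\int[mu]_x (x ^+ 2 * gauss_phi x)%:E)%E = M%:E.
  by rewrite fineK// integrable_fin_num// integrable_sqr_gauss_phi.
have iphi := integrable_gauss_phi; have isqr := integrable_sqr_gauss_phi.
have mphi := measurable_gauss_phi.
have : (\int[mu]_x (- ln sg * gauss_phi x + (1 - sg ^-2) / 2 * (x ^+ 2 * gauss_phi x))%:E
    <= \int[mu]_x (normal_pdf 0 sg x - gauss_phi x)%:E)%E.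
  apply: le_integral_EFin => [| |x]; last exact: normal_pdf_sub_gauss_phi_ge.
    by apply: measurable_funD; apply: measurable_funM => //; exact: measurable_funM.
  by apply: measurable_funB => //; exact: measurable_normal_pdf.
rewrite (integral_EFinD (integrable_EFinZl _ iphi) (integrable_EFinZl _ isqr)).
rewrite (integral_EFinZl _ iphi) (integral_EFinZl _ isqr) ME integral_gauss_phi.
rewrite (integral_EFinB (integrable_normal_pdf 0 sg) iphi) integral_normal_pdf.
by rewrite integral_gauss_phi subee// mule1 -EFinM -EFinD lee_fin; lra.
Qed.

(* For [sg ^+ 2 = M], [gauss_second_moment_le] reads [(M - 1) / 2 <= ln sg <= sg - 1],
   which forces [sg = 1]. *)
Lemma integral_sqr_gauss_phi : (\int[mu]_x (x ^+ 2 * gauss_phi x)%:E = 1)%E.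
Proof.
have fin : (\int[mu]_x (x ^+ 2 * gauss_phi x)%:E)%E \is a fin_num.
  exact: integrable_fin_num integrable_sqr_gauss_phi.
rewrite -(fineK fin); congr EFin; set M := fine _.
have M_gt0 : 0 < M.
  have ln2 : 0 < ln (2 : R) by rewrite ln_gt0// ltr1n.
  have := @gauss_second_moment_le 2^-1 ltac:(by rewrite invr_gt0).
  by rewrite exprVn invrK lnV ?posrE// expr2 -/M; lra.
pose r := Num.sqrt M; have r_gt0 : 0 < r by rewrite sqrtr_gt0.
have rr : r ^+ 2 = M by rewrite sqr_sqrtr ?ltW.
have := gauss_second_moment_le r_gt0.
have -> : (1 - r ^-2) / 2 * M = (M - 1) / 2 by rewrite -rr; field; rewrite gt_eqF.
have : ln r <= r - 1 by have := @le_ln1Dx R (r - 1); rewrite addrCA subrr addr0; apply; lra.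
rewrite -rr => ln_le ineq.
have : (r - 1) ^+ 2 = 0 by apply/le_anti; rewrite sqr_ge0 andbT; nra.
move/eqP; rewrite sqrf_eq0 subr_eq0 => /eqP r1.
by rewrite r1 expr1n.
Qed.

End gauss_moments.

Section KL_bound.
Context {R : realType}.
Local Notation mu := (@lebesgue_measure R).
Implicit Types (p : R -> R) (d e u v x T : R).

Lemma xlnx_div_split u v : 0 <= u -> 0 < v ->
  u * ln (u / v) = (u * ln u - v * ln v) + (u - v) * - ln v.
Proof.
move=> u0 v0; have [->|uneq0] := eqVneq u 0; first by rewrite !mul0r; ring.
have up : 0 < u by rewrite lt_neqAle eq_sym uneq0.
by rewrite ln_div ?posrE//; ring.
Qed.

Lemma measurable_KL_integrand p : measurable_fun setT p -> (forall x, 0 <= p x) ->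
  measurable_fun setT (fun x => p x * ln (p x / gauss_phi x)).
Proof.
move=> mp p0; have mphi := @measurable_gauss_phi R.
apply: (eq_measurable_fun (fun x => (p x * ln (p x) - gauss_phi x * ln (gauss_phi x))
  + (p x - gauss_phi x) * - ln (gauss_phi x))).
  by move=> x _; rewrite xlnx_div_split ?gauss_phi_gt0.
have mlnp := measurableT_comp (@measurable_ln R) mp.
have mlnphi := measurableT_comp (@measurable_ln R) mphi.
apply: measurable_funD; first by apply: measurable_funB; exact: measurable_funM.
by apply: measurable_funM; [exact: measurable_funB|exact: measurableT_comp].
Qed.

Lemma KL_integrand_le e d T u x : 0 < e <= 1 -> 0 <= u <= 1 ->
  `|u - gauss_phi x| <= d -> d <= 1 -> 0 <= T ->
  u * ln (u / gauss_phi x) <=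
  2 / e * d `^ (1 - e) * \1_`[- T, T] x
  + gauss_tail_const * expR (- T ^+ 2 / 8) * normal_pdf 0 2 x
  + (u - gauss_phi x) * - ln (gauss_phi x).
Proof.
move=> e01 /andP[u0 u1] ud d1 T0.
rewrite xlnx_div_split ?gauss_phi_gt0// lerD2r.
have tail0 : 0 <= gauss_tail_const * expR (- T ^+ 2 / 8) * normal_pdf 0 2 x.
  by rewrite mulr_ge0 ?normal_pdf_ge0// mulr_ge0 ?gauss_tail_const_ge0 ?expR_ge0.
have [xT|Tx] := leP `|x| T.
  rewrite indicE mem_set /=; last by rewrite in_itv /= -ler_norml.
  have phi01 : 0 <= gauss_phi x <= 1.
    by rewrite ltW ?gauss_phi_gt0// (le_trans (gauss_phi_le_peak x)) ?gauss_peak_le1.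
  have := xlnx_modulus e01 (u := u) ltac:(by rewrite u0 u1) phi01 ud d1.
  by rewrite mulr1; lra.
rewrite indicE memNset /=; last by rewrite in_itv /= -ler_norml leNgt Tx.
have := xlnx_le0 (u := u) ltac:(by rewrite u0 u1).
have := Nxlnx_gauss_phi_tail T0 Tx.
by rewrite mulr0 add0r; lra.
Qed.

Lemma integrable_density_moments p : measurable_fun setT p -> (forall x, 0 <= p x) ->
  (\int[mu]_x (p x)%:E = 1)%E -> (\int[mu]_x (x ^+ 2 * p x)%:E = 1)%E ->
  mu.-integrable setT (EFin \o p) /\
  mu.-integrable setT (EFin \o (fun x => x ^+ 2 * p x)).
Proof.
move=> mp p0 ip ix2p; split; apply: integrable_EFin_ge0 => //.
- by rewrite ip ltry.
- exact: measurable_funM.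
- by move=> x; rewrite mulr_ge0 ?sqr_ge0.
- by rewrite ix2p ltry.
Qed.

Lemma sub_gauss_phi_mul_NlnE p x : (p x - gauss_phi x) * - ln (gauss_phi x) =
  - ln gauss_peak * (p x - gauss_phi x) + 2^-1 * (x ^+ 2 * p x - x ^+ 2 * gauss_phi x).
Proof. by rewrite Nln_gauss_phi; ring. Qed.

Lemma integrable_sub_gauss_phi_mul_Nln p :
  mu.-integrable setT (EFin \o p) ->
  mu.-integrable setT (EFin \o (fun x => x ^+ 2 * p x)) ->
  mu.-integrable setT (EFin \o (fun x => (p x - gauss_phi x) * - ln (gauss_phi x))).
Proof.
move=> ip ix2p; apply: eq_integrable measurableT _ _ _ (integrable_EFinD
  (integrable_EFinZl _ (integrable_EFinB ip integrable_gauss_phi))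
  (integrable_EFinZl _ (integrable_EFinB ix2p integrable_sqr_gauss_phi))).
by move=> x _; rewrite /= sub_gauss_phi_mul_NlnE.
Qed.

(* [- ln phi] is affine in [x ^+ 2], and [p], [phi] share their mass and second moment. *)
Lemma integral_sub_gauss_phi_mul_Nln p :
  mu.-integrable setT (EFin \o p) ->
  mu.-integrable setT (EFin \o (fun x => x ^+ 2 * p x)) ->
  (\int[mu]_x (p x)%:E = 1)%E -> (\int[mu]_x (x ^+ 2 * p x)%:E = 1)%E ->
  (\int[mu]_x ((p x - gauss_phi x) * - ln (gauss_phi x))%:E = 0)%E.
Proof.
move=> ip ix2p ip1 ix2p1.
have i1 := integrable_EFinB ip integrable_gauss_phi.
have i2 := integrable_EFinB ix2p integrable_sqr_gauss_phi.
under eq_integral do rewrite sub_gauss_phi_mul_NlnE.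
rewrite (integral_EFinD (integrable_EFinZl _ i1) (integrable_EFinZl _ i2)).
rewrite (integral_EFinZl _ i1) (integral_EFinZl _ i2).
rewrite (integral_EFinB ip integrable_gauss_phi).
rewrite (integral_EFinB ix2p integrable_sqr_gauss_phi).
by rewrite ip1 ix2p1 integral_gauss_phi integral_sqr_gauss_phi subee// !mule0 adde0.
Qed.

Lemma KL_gauss_le_window p e d T : measurable_fun setT p -> (forall x, 0 <= p x <= 1) ->
  (\int[mu]_x (p x)%:E = 1)%E -> (\int[mu]_x (x ^+ 2 * p x)%:E = 1)%E ->
  (forall x, `|p x - gauss_phi x| <= d) -> d <= 1 -> 0 < e <= 1 -> 0 < T ->
  (KL_gauss p <=
   (2 / e * d `^ (1 - e) * (2 * T) + gauss_tail_const * expR (- T ^+ 2 / 8))%:E)%E.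
Proof.
move=> mp p01 ip1 ix2p1 pd d1 e01 T0.
have p0 x : 0 <= p x by case/andP: (p01 x).
have [ip ix2p] := integrable_density_moments mp p0 ip1 ix2p1.
set w := 2 / e * d `^ (1 - e); set K := gauss_tail_const * expR (- T ^+ 2 / 8).
have i1 := integrable_EFinZl w (integrable_indic_itv (- T) T true false).
have i2 := integrable_EFinZl K (integrable_normal_pdf 0 2).
have i3 := integrable_sub_gauss_phi_mul_Nln ip ix2p.
have i12 := integrable_EFinD i1 i2.
have mbound := measurable_int mu (integrable_EFinD i12 i3).
move/measurable_EFinP in mbound.
apply: le_trans (le_integral_EFin mu (measurable_KL_integrand mp p0) mbound _) _.
  by move=> x; apply: KL_integrand_le => //; exact: ltW.
rewrite (integral_EFinD i12 i3) (integral_EFinD i1 i2).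
rewrite (integral_sub_gauss_phi_mul_Nln ip ix2p)//.
rewrite (integral_EFinZl _ (integrable_normal_pdf 0 2)) integral_normal_pdf mule1 adde0.
rewrite (integral_EFinZl _ (integrable_indic_itv (- T) T true false)) integral_indic// setIT.
have hT : mu `[- T, T] = (2 * T)%:E.
  by rewrite lebesgue_measure_itv/= lte_fin gtrN// -EFinD opprK; congr EFin; ring.
rewrite [X in (X + _ <= _)%E](_ : _ = (w * (2 * T))%:E) -?EFinD//.
exact: (congr1 (fun m => (w%:E * m)%E) hT).
Qed.

Definition KL_const e : R := 4 / e * (1 + 8 / e) + gauss_tail_const.

Lemma KL_const_gt0 e : 0 < e -> 0 < KL_const e.
Proof.
move=> e0; rewrite ltr_wpDr ?gauss_tail_const_ge0// mulr_gt0 ?divr_gt0//.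
by rewrite ltr_wpDr ?ltr01// divr_ge0// ltW.
Qed.

(* The window [[-T, T]] with [T = 1 - 8 ln d] makes the Gaussian tail [e^(-T^2/8)]
   at most [d]. *)
Lemma KL_gauss_le_powR p e d : measurable_fun setT p -> (forall x, 0 <= p x) ->
  (\int[mu]_x (p x)%:E = 1)%E -> (\int[mu]_x (x ^+ 2 * p x)%:E = 1)%E ->
  (forall x, `|p x - gauss_phi x| <= d) -> d <= 2^-1 -> 0 < e <= 1 ->
  (KL_gauss p <= (KL_const e * d `^ (1 - 2 * e))%:E)%E.
Proof.
move=> mp p0 ip1 ix2p1 pd d12 e01; have /andP[e0 e1] := e01.
have d0 : 0 <= d := le_trans (normr_ge0 _) (pd 0).
have [d00|dneq0] := eqVneq d 0.
  have pE x : p x = gauss_phi x.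
    by apply/eqP; rewrite -subr_eq0 -normr_le0 -d00.
  rewrite /KL_gauss.
  under eq_integral do rewrite pE divff ?gt_eqF ?gauss_phi_gt0// ln1 mulr0.
  by rewrite integral0 lee_fin mulr_ge0 ?powR_ge0// ltW// KL_const_gt0.
have d_gt0 : 0 < d by rewrite lt_neqAle eq_sym dneq0.
have d_lt1 : d < 1 by apply: le_lt_trans d12 _; rewrite invf_lt1// ltr1n.
have p01 x : 0 <= p x <= 1.
  rewrite p0 /=; have := pd x; have := gauss_phi_le_peak x; have := @gauss_peak_le_half R.
  have := ler_norm (p x - gauss_phi x); lra.
have lnd : ln d < 0 by rewrite ln_lt0// d_gt0.
pose T := 1 - 8 * ln d; have T_gt0 : 0 < T by rewrite /T; lra.
apply: le_trans (KL_gauss_le_window mp p01 ip1 ix2p1 pd (ltW d_lt1) e01 T_gt0) _.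
rewrite lee_fin /KL_const [leRHS]mulrDl; apply: lerD.
  have -> : 2 / e * d `^ (1 - e) * (2 * T) = 4 / e * (d `^ (1 - e) * (1 - 8 * ln d)).
    by rewrite /T; ring.
  rewrite -[leRHS]mulrA; apply: ler_wpM2l; first by rewrite divr_ge0// ltW.
  by apply: powR_mul_1DNln_le => //; rewrite d_gt0 ltW.
apply: ler_wpM2l; first exact: gauss_tail_const_ge0.
have expT : expR (- T ^+ 2 / 8) <= d.
  by rewrite -[leRHS]lnK ?posrE// ler_expR; rewrite /T; nra.
by apply: le_trans expT _; apply: ger1_powR; rewrite ?d_gt0 ?ltW//; lra.
Qed.

End KL_bound.

Section moment_and_logarithm_bounds.
Context {R : realType}.
Local Notation mu := (@lebesgue_measure R).
Implicit Types (p : R -> R) (a eps n s x : R).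

(* By [sqr_le_convex_powR], [E X^2 <= (2/s) E|X|^s + 1 - 2/s]. *)
Lemma abs_moment_ge1 p s : 2 < s -> measurable_fun setT p -> (forall x, 0 <= p x) ->
  (\int[mu]_x (p x)%:E = 1)%E -> (\int[mu]_x (x ^+ 2 * p x)%:E = 1)%E ->
  (abs_moment p s < +oo)%E -> 1 <= fine (abs_moment p s).
Proof.
move=> s2 mp p0 ip1 ix2p1 hm.
have [ip ix2p] := integrable_density_moments mp p0 ip1 ix2p1.
have mq : measurable_fun setT (fun x => `|x| `^ s * p x).
  apply: measurable_funM => //; apply: (measurableT_comp (measurable_powR s)).
  exact: normr_measurable.
have iq : mu.-integrable setT (EFin \o (fun x => `|x| `^ s * p x)).
  by apply: integrable_EFin_ge0 hm => // x; rewrite mulr_ge0 ?powR_ge0.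
have mE : abs_moment p s = (fine (abs_moment p s))%:E.
  by rewrite fineK// integrable_fin_num.
have iRHS :=
  integrable_EFinD (integrable_EFinZl (2 / s) iq) (integrable_EFinZl (1 - 2 / s) ip).
have mx2p := measurable_int mu ix2p; have mRHS := measurable_int mu iRHS.
move/measurable_EFinP in mx2p; move/measurable_EFinP in mRHS.
have := le_integral_EFin mu mx2p mRHS.
have /[swap]/[apply] :
    forall x, x ^+ 2 * p x <= 2 / s * (`|x| `^ s * p x) + (1 - 2 / s) * p x.
  by move=> x; have := sqr_le_convex_powR x s2; have := p0 x; nra.
rewrite (integral_EFinD (integrable_EFinZl _ iq) (integrable_EFinZl _ ip)).
rewrite (integral_EFinZl _ iq) (integral_EFinZl _ ip) ix2p1 ip1.
rewrite -/(abs_moment p s) mE -EFinM -EFinD lee_fin mulr1.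
have : 0 < 2 / s by rewrite divr_gt0//; lra.
nra.
Qed.

Lemma fine_supnorm_diff p : (supnorm_diff p <= (1 / 2)%:E)%E ->
  0 <= fine (supnorm_diff p) <= 2^-1 /\
  forall x, `|p x - gauss_phi x| <= fine (supnorm_diff p).
Proof.
move=> hs; have ub x : ((`|p x - gauss_phi x|)%:E <= supnorm_diff p)%E.
  by apply: ereal_sup_ubound; exists x.
have s0 : (0 <= supnorm_diff p)%E by apply: le_trans (ub 0); rewrite lee_fin.
have sE : supnorm_diff p = (fine (supnorm_diff p))%:E.
  by rewrite fineK// ge0_fin_numE//; apply: le_lt_trans hs _; exact: ltry.
split; first by move: s0 hs; rewrite sE !lee_fin mul1r => -> ->.
by move=> x; have := ub x; rewrite [X in (_ <= X)%E]sE lee_fin.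
Qed.

Lemma sqrt_ln2_powR_le a n : 0 < a -> 0 <= n <= 2^-1 ->
  Num.sqrt (ln 2) `^ a * n `^ a <= (Num.sqrt `|ln n| * n) `^ a.
Proof.
move=> a0 /andP[n0 n12]; have [->|nneq0] := eqVneq n 0.
  by rewrite powR0 ?gt_eqF// mulr0 powR_ge0.
have n_gt0 : 0 < n by rewrite lt_neqAle eq_sym nneq0.
rewrite powRM ?sqrtr_ge0// ler_wpM2r ?powR_ge0//.
apply: ge0_ler_powR; rewrite ?nnegrE ?sqrtr_ge0//; first exact: ltW.
rewrite ler_sqrt ?normr_ge0//.
have ln2 : 0 < ln (2 : R) by rewrite ln_gt0// ltr1n.
have lnn : ln n <= - ln 2 by rewrite -lnV ?posrE// ler_ln ?posrE ?invr_gt0.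
by rewrite ler0_norm; lra.
Qed.

Lemma Meps_set_ub eps x : 0 < eps -> 0 <= x <= 1 ->
  x `^ eps * Num.sqrt `|ln x| <= 1 + eps^-1.
Proof.
move=> e0 /andP[x0 x1]; have [->|xneq0] := eqVneq x 0.
  by rewrite powR0 ?gt_eqF// mul0r addr_ge0// invr_ge0 ltW.
have x_gt0 : 0 < x by rewrite lt_neqAle eq_sym xneq0.
have lnx : 0 <= - ln x by rewrite oppr_ge0 ln_le0.
have xlnx := powR_mulNln_le e0 (x := x) ltac:(by rewrite x_gt0 x1).
have xe1 : x `^ eps <= 1 by rewrite -(powRr0 x) ger_powR ?x_gt0 ?x1// ltW.
have sq : Num.sqrt (- ln x) <= 1 + - ln x.
  rewrite -powR12_sqrt//; apply: powR_le1D lnx.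
  by rewrite invr_ge0 ler0n invf_le1// ler1n.
rewrite ler0_norm ?ln_le0//.
have := powR_ge0 x eps; nra.
Qed.

Lemma le_Meps eps x : 0 < eps -> 0 <= x <= 1 ->
  x `^ eps * Num.sqrt `|ln x| + 1 <= Meps eps.
Proof.
move=> e0 x01; rewrite lerD2r; apply: sup_upper_bound; last by exists x.
split; first by exists (x `^ eps * Num.sqrt `|ln x|), x.
by exists (1 + eps^-1) => _ [y y01 <-]; apply: Meps_set_ub; rewrite // in_itv in y01.
Qed.

Lemma sqrt_ln_powR_le_Meps eps a n : 0 < eps -> 0 <= n <= 1 -> 0 < a <= 1 ->
  (Num.sqrt `|ln n| * n) `^ a <= Meps eps * n `^ (a * (1 - eps)).
Proof.
move=> e0 n01 /andP[a0 a1]; have /andP[n0 n1] := n01.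
have M0 : 0 <= Meps eps.
  by apply: le_trans (le_Meps e0 n01); rewrite addr_ge0 ?mulr_ge0 ?powR_ge0 ?sqrtr_ge0.
have [->|nneq0] := eqVneq n 0.
  by rewrite mulr0 (powR0 (lt0r_neq0 a0)) mulr_ge0 ?powR_ge0.
have n_gt0 : 0 < n by rewrite lt_neqAle eq_sym nneq0.
set z := n `^ eps * Num.sqrt `|ln n|.
have z0 : 0 <= z by rewrite mulr_ge0 ?powR_ge0 ?sqrtr_ge0.
have -> : Num.sqrt `|ln n| * n = z * n `^ (1 - eps).
  by rewrite /z mulrAC [n `^ eps * _]mulrC -(powR_split eps n_gt0) mulrC.
rewrite powRM ?powR_ge0// -powRrM [(1 - eps) * a]mulrC ler_wpM2r ?powR_ge0//.
apply: le_trans (powR_le1D _ z0) _; first by rewrite (ltW a0) a1.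
by rewrite addrC le_Meps.
Qed.

End moment_and_logarithm_bounds.

Theorem corollary2p6 (R : realType) (s : R) (hs : 2 < s) :
  exists C1 : R, 0 < C1 /\
  forall p : R -> R,
    measurable_fun [set: R] p ->
    (forall x, 0 <= p x) ->
    (\int[@lebesgue_measure R]_x (p x)%:E = 1)%E ->
    (\int[@lebesgue_measure R]_x (x * p x)%:E = 0)%E ->
    (\int[@lebesgue_measure R]_x (x ^+ 2 * p x)%:E = 1)%E ->
    (abs_moment p s < +oo)%E ->
    (supnorm_diff p <= (1 / 2)%:E)%E ->
    forall eps : R, 0 < eps ->
      let n := fine (supnorm_diff p) in
      let m := fine (abs_moment p s) in
      (KL_gauss p <=
         (C1 * m `^ (2 / s) * (Num.sqrt `|ln n| * n) `^ (1 - 2 / s))%:E)%E /\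
      C1 * m `^ (2 / s) * (Num.sqrt `|ln n| * n) `^ (1 - 2 / s)
        <= C1 * Meps eps * m `^ (2 / s) * n `^ ((1 - 2 / s) * (1 - eps)).
Proof.
have s_gt0 : 0 < s by lra.
have e01 : 0 < s^-1 <= 1 by rewrite invr_gt0 s_gt0 invf_le1//; lra.
have a01 : 0 < 1 - 2 / s <= 1.
  by rewrite subr_gt0 ltr_pdivrMr// mul1r hs /= lerBlDr lerDl divr_ge0// ltW.
set a := 1 - 2 / s in a01 *.
have l2a_gt0 : 0 < Num.sqrt (ln 2) `^ a by rewrite powR_gt0// sqrtr_gt0 ln_gt0// ltr1n.
pose C1 := KL_const s^-1 / Num.sqrt (ln 2) `^ a.
have C1_gt0 : 0 < C1 by rewrite divr_gt0// KL_const_gt0; case/andP: e01.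
exists C1; split => // p mp p0 ip1 _ ix2p1 hm hsup eps eps0 n m.
have [/andP[n0 n12] pn] := fine_supnorm_diff hsup.
have m1 : 1 <= m `^ (2 / s).
  rewrite -[leLHS](powRr0 m) ler_powR ?divr_ge0 ?(ltW s_gt0)//.
  exact: abs_moment_ge1 hs mp p0 ip1 ix2p1 hm.
have Cm0 : 0 <= C1 * m `^ (2 / s) by rewrite mulr_ge0 ?powR_ge0// ltW.
split.
  apply: le_trans (KL_gauss_le_powR mp p0 ip1 ix2p1 pn n12 e01) _.
  have -> : KL_const s^-1 = C1 * Num.sqrt (ln 2) `^ a by rewrite /C1 divfK ?gt_eqF.
  rewrite lee_fin -/a -mulrA -[leRHS]mulrA; apply: ler_wpM2l; first exact: ltW.
  apply: le_trans (sqrt_ln2_powR_le _ _) _; [by case/andP: a01 | by rewrite n0 |].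
  by rewrite ler_peMl ?powR_ge0.
have n01 : 0 <= n <= 1 by rewrite n0 (le_trans n12)// invf_le1// ler1n.
apply: le_trans (ler_wpM2l Cm0 (sqrt_ln_powR_le_Meps eps0 n01 a01)) _.
by rewrite mulrA (mulrAC C1).
Qed.
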